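(* Let $P=X_{\iota(1)}^{\tau(1)}\cdots X_{\iota(k)}^{\tau(k)}$ be a real-eigenvalued symbolic matrix product (possibly including symmetric variables) with $\ell$ variables and degree $k$, where $\tau(i)\in\{1,T,\mathrm{sym}\}$. Let $(F_i,(a_i,b_i))$, $i\in[\ell]$, be edge-rooted graphs. Then the graph $G^2(F_{\iota(1)}^{\tau(1)},\dots,F_{\iota(k)}^{\tau(k)})$ is positive.
   Context: Symbolic products: a formal word $P=\prod_{i=1}^kX_{\iota(i)}^{\tau(i)}$ with $\iota:[k]\to[\ell]$, $\tau:[k]\to\{1,T,\mathrm{sym}\}$, where if $\tau(i)=\mathrm{sym}$ for some $i$ with $\iota(i)=j$ then $\tau(i')=\mathrm{sym}$ for all $i'$ with $\iota(i')=j$. For admissible assignments $A_1,\dots,A_\ell\in\mathbb R^{n\times n}$ ($A_j$ symmetric if $X_j$ carries $\mathrm{sym}$), $P(A_1,\dots,A_\ell)$ substitutes $A_i$ for $X_i,X_i^{\mathrm{sym}}$ and $A_i^T$ for $X_i^T$. $P$ is real-eigenvalued if for all $n$ and all admissible assignments all eigenvalues of $P(A_1,\dots,A_\ell)$ are real. Graphs: an edge-rooted graph is $(F,(a,b))$ with $(a,b)$ an oriented edge of the simple graph $F$. Set $F^1=(F,(a,b))$, $F^T=(F,(b,a))$, and $F^{\mathrm{sym}}$ is the edge-rooted graph obtained from two disjoint copies of $F$ with roots $(a_1,b_1)$, $(a_2,b_2)$ by identifying $a_1$ with $b_2$ (new root $a$) and $b_1$ with $a_2$ (new root $b$), rooted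 at $(a,b)$. For pairwise disjoint edge-rooted graphs $(H_1,(a_1,b_1)),\dots,(H_m,(a_m,b_m))$, the graph $G(H_1,\dots,H_m)$ is obtained from a cycle $v_1v_2\cdots v_m$ by identifying, for each $i$ (indices modulo $m$), the three vertices $b_{i-1}$, $a_i$, $v_i$. Define $G^2(H_1,\dots,H_k)=G(H_1,\dots,H_k,H_{k+1},\dots,H_{2k})$ where $H_{k+i}$ is a disjoint copy of $H_i$; in the claim, disjoint copies of the $F$'s are used for the $k$ positions. An edge-weighted graph $H$ assigns a real weight $\beta_{xy}$ to each edge; for a graph $G$, $\hom(G,H)=\sum_{\varphi}\prod_{uv\in E(G)}\beta_{\varphi(u)\varphi(v)}$ over all homomorphisms $\varphi:G\to H$. $G$ is positive if $\hom(G,H)\ge0$ for every edge-weighted graph $H$ (weights may be negative). *)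

From HB Require Import structures.
From mathcomp Require Import all_boot all_order all_algebra.
From mathcomp Require Import reals.
From mathcomp Require Import complex.

Set Implicit Arguments.
Unset Strict Implicit.
Unset Printing Implicit Defensive.

Import Order.TTheory GRing.Theory Num.Theory.
Local Open Scope ring_scope.

Inductive mtype := Tone | Ttr | Tsym.

Definition mtype_eqb (s t : mtype) : bool :=
  match s, t with
  | Tone, Tone | Ttr, Ttr | Tsym, Tsym => true
  | _, _ => false
  end.

Definition sym_consistent (l k : nat) (iota : 'I_k -> 'I_l) (tau : 'I_k -> mtype) : Prop :=
  forall i i' : 'I_k, tau i = Tsym -> iota i' = iota i -> tau i' = Tsym.

Definition admissible (R : realType) (l k n : nat) (iota : 'I_k -> 'I_l)
  (tau : 'I_k -> mtype) (A : 'I_l -> 'M[R]_n) : Prop :=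
  forall i : 'I_k, tau i = Tsym -> (A (iota i))^T = A (iota i).

Definition subst_factor (R : realType) (l n : nat) (A : 'I_l -> 'M[R]_n)
  (j : 'I_l) (t : mtype) : 'M[R]_n :=
  match t with
  | Ttr => (A j)^T
  | _ => A j
  end.

Definition eval_prod (R : realType) (l k n : nat) (iota : 'I_k -> 'I_l)
  (tau : 'I_k -> mtype) (A : 'I_l -> 'M[R]_n) : 'M[R]_n :=
  \prod_(i < k) subst_factor A (iota i) (tau i).

Definition real_eigenvalued (R : realType) (l k : nat) (iota : 'I_k -> 'I_l)
  (tau : 'I_k -> mtype) : Prop :=
  forall (n : nat) (A : 'I_l -> 'M[R]_n), admissible iota tau A ->
  forall lam : R[i],
    eigenvalue (map_mx (fun x : R => real_complex R x) (eval_prod iota tau A)) lam ->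
    Im lam = 0.

(* Multigraphs: a finite vertex type and a list (multiset) of edges;
   the orientation of a listed pair is irrelevant for hom below since the
   weight matrices are symmetric. *)
Record mgraph := MGraph { mv : finType; me : seq (mv * mv) }.

Record rgraph := RGraph { rv : finType; re : seq (rv * rv); ra : rv; rb : rv }.

Definition rg_graph (G : rgraph) : mgraph := @MGraph (rv G) (re G).

Record ergraph := ERGraph {
  sv : finType;
  sadj : rel sv;
  sadj_sym : symmetric sadj;
  sadj_irr : irreflexive sadj;
  sa : sv;
  sb : sv;
  sab : sadj sa sb }.

Definition simple_edges (V : finType) (e : rel V) : seq (V * V) :=
  [seq p <- [seq (x, y) | x <- enum V, y <- enum V]
     | e p.1 p.2 && (enum_rank p.1 < enum_rank p.2)%N].

Definition erg_rg (F : ergraph) : rgraph :=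
  @RGraph (sv F) (simple_edges (@sadj F)) (sa F) (sb F).

(* Quotient of a vertex set by the equivalence generated by a list of pairs *)
Definition idrel (V : finType) (ids : seq (V * V)) : rel V :=
  fun x y => ((x, y) \in ids) || ((y, x) \in ids).

Lemma idrel_sym (V : finType) (ids : seq (V * V)) : symmetric (idrel ids).
Proof. by move=> x y; rewrite /idrel orbC. Qed.

Definition qtype (V : finType) (ids : seq (V * V)) : finType :=
  {x : V | fingraph.root (idrel ids) x == x}.

Lemma qproj_subproof (V : finType) (ids : seq (V * V)) (x : V) :
  fingraph.root (idrel ids) (fingraph.root (idrel ids) x) == fingraph.root (idrel ids) x.
Proof. by apply/eqP; apply: fingraph.root_root; apply: sym_connect_sym; apply: idrel_sym. Qed.

Definition qproj (V : finType) (ids : seq (V * V)) (x : V) : qtype ids :=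
  exist _ (fingraph.root (idrel ids) x) (qproj_subproof ids x).

Definition gluem (V : finType) (E : seq (V * V)) (ids : seq (V * V)) : mgraph :=
  @MGraph (qtype ids) [seq (qproj ids p.1, qproj ids p.2) | p <- E].

Definition glue (V : finType) (E : seq (V * V)) (ids : seq (V * V)) (a b : V) : rgraph :=
  @RGraph (qtype ids) [seq (qproj ids p.1, qproj ids p.2) | p <- E]
    (qproj ids a) (qproj ids b).

Definition rg_tr (F : rgraph) : rgraph := @RGraph (rv F) (re F) (rb F) (ra F).

Definition rg_sym (F : rgraph) : rgraph :=
  @glue (rv F + rv F)%type
    ([seq (inl p.1, inl p.2) | p <- re F] ++ [seq (inr p.1, inr p.2) | p <- re F])
    [:: (inl (ra F), inr (rb F)); (inl (rb F), inr (ra F))]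
    (inl (ra F)) (inl (rb F)).

Definition rg_pow (t : mtype) (F : rgraph) : rgraph :=
  match t with
  | Tone => F
  | Ttr => rg_tr F
  | Tsym => rg_sym F
  end.

(* G(H_1, ..., H_m): disjoint union of the H_i, identifying b_{i-1} with a_i
   (indices mod m); the identified vertex is the cycle vertex v_i, and the
   cycle edge v_i v_{i+1} is the root edge a_i b_i of H_i (already present). *)
Definition Gcyc (m : nat) (H : 'I_m -> rgraph) : mgraph :=
  @gluem {i : 'I_m & rv (H i)}
     (flatten [seq [seq (@Tagged _ i (fun j => rv (H j)) p.1,
                         @Tagged _ i (fun j => rv (H j)) p.2) | p <- re (H i)]
              | i <- enum 'I_m])
     [seq (@Tagged _ i (fun j => rv (H j)) (rb (H i)),
           @Tagged _ (ordS i) (fun j => rv (H j)) (ra (H (ordS i))))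
     | i <- enum 'I_m].

(* G^2(H_1,...,H_k) = G(H_1,...,H_k,H_{k+1},...,H_{2k}) with H_{k+i} a disjoint
   copy of H_i (disjointness is automatic in the tagged union above). *)
Definition G2 (k : nat) (H : 'I_k -> rgraph) : mgraph :=
  @Gcyc (k + k) (fun i => match split i with inl j => H j | inr j => H j end).

(* An edge-weighted graph H on vertex set 'I_n is given by a symmetric real
   matrix beta of edge weights (beta_xy = 0 meaning "no edge"); then
   hom(G,H) = sum over maps phi : V(G) -> V(H) of prod_{uv in E(G)} beta_{phi u phi v}
   (maps that are not homomorphisms contribute 0). *)
Definition hom (R : realType) (G : mgraph) (n : nat) (beta : 'M[R]_n) : R :=
  \sum_(phi : {ffun mv G -> 'I_n}) \prod_(p <- me G) beta (phi p.1) (phi p.2).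

Definition positive_graph (R : realType) (G : mgraph) : Prop :=
  forall (n : nat) (beta : 'M[R]_n), beta^T = beta -> 0 <= hom G beta.

(* Gluing along the cycle turns hom(G(H_1, ..., H_m), beta) into the trace of the product of
   the rooted homomorphism matrices M_H(x, y), which sum the weights of the maps sending the root
   edge of H to (x, y).  Reversing the root transposes M_F, while F^sym yields the entrywise
   product of M_F with its transpose, a symmetric matrix.  Hence hom(G^2(...), beta) = tr(P(A)^2)
   for an admissible assignment A, and as P(A) has real eigenvalues lam_i this trace equals
   sum_i lam_i^2 >= 0 (read off a Schur triangularisation). *)

From Pilot Require Import Defs.
From HB Require Import structures.
From mathcomp Require Import all_boot all_order all_algebra.
From mathcomp Require Import reals complex.
Set Implicit Arguments.
Unset Strict Implicit.
Unset Printing Implicit Defensive.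
Import Order.TTheory GRing.Theory Num.Theory.
Local Open Scope ring_scope.

Lemma mxtrace_trig_sqr (R : comNzRingType) n (T : 'M[R]_n) :
  is_trig_mx T -> \tr (T *m T) = \sum_i T i i ^+ 2.
Proof.
move=> /is_trig_mxP Ttrig; apply: eq_bigr => i _.
rewrite mxE (bigD1 i) //= big1 ?addr0 ?expr2 // => j /negbTE neq_ji.
have [lt_ij|lt_ji|eq_ij] := ltngtP i j.
- by rewrite Ttrig // mul0r.
- by rewrite (Ttrig j i) // mulr0.
- by move: neq_ji; rewrite (val_inj eq_ij) eqxx.
Qed.

Lemma eigenvalue_trig_diag (F : fieldType) n (T : 'M[F]_n) i :
  is_trig_mx T -> eigenvalue T (T i i).
Proof.
move=> Ttrig; rewrite eigenvalue_root_char.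
rewrite char_poly_trig // rootE horner_prod prodf_seq_eq0.
by apply/hasP; exists i; rewrite ?mem_index_enum // !hornerE subrr.
Qed.

Lemma mxtrace_sqr_ge0 (R : rcfType) n (P : 'M[R]_n) :
  (forall lam, eigenvalue (map_mx (real_complex R) P) lam -> Im lam = 0) ->
  0 <= \tr (P ^+ 2).
Proof.
case: n P => [|n] P real_spec; first by rewrite /mxtrace big_ord0.
rewrite expr2 -mulmxE.
set B := map_mx (real_complex R) P.
have [U unitaryU /= Ttrig] := Schur B (ltn0Sn n).
have Uunit := unitarymx_unit unitaryU.
set T := conjmx U B in Ttrig.
have trTT : \tr (T *m T) = \tr (B *m B).
  by rewrite /T conjumx // -!mulmxA mxtrace_mulC -!mulmxA !(mulmxA (invmx U)) mulVmx
    // !mul1mx mulmx1.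
have : (0 : R[i]) <= \tr (T *m T).
  rewrite mxtrace_trig_sqr // sumr_ge0 // => i _.
  have Bev : eigenvalue B (T i i).
    apply: (eigenvalue_conjmx (V := U)); last exact: eigenvalue_trig_diag.
      by apply: submx_full; rewrite row_full_unit.
    by rewrite row_free_unit.
  by rewrite real_exprn_even_ge0 //; apply/Creal_ImP/real_spec.
by rewrite trTT -map_mxM trace_map_mx ler0c.
Qed.

Section Walks.
Variables (R : pzSemiRingType) (n : nat).

Lemma prodmx_entry_walks m (M : nat -> 'M[R]_n) (a b : 'I_n) :
  (\prod_(i < m) M i) a b =
  \sum_(x : {ffun 'I_m.+1 -> 'I_n} | (x ord0 == a) && (x ord_max == b))
     \prod_(i < m) M i (x (widen_ord (leqnSn m) i)) (x (lift ord0 i)).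
Proof.
elim: m M a b => [|m IH] M a b.
  rewrite big_ord0 mxE.
  have x_max (x : {ffun 'I_1 -> 'I_n}) : x ord_max = x ord0 by congr (x _); apply: val_inj.
  under eq_bigr do rewrite big_ord0.
  have [<-|neq_ab] := eqVneq a b.
    rewrite (big_pred1 [ffun=> a]) // => x; rewrite x_max andbb.
    apply/eqP/eqP; last by move/ffunP/(_ ord0); rewrite ffunE.
    by move=> x0; apply/ffunP => i; rewrite ffunE ord1 x0.
  rewrite big_pred0 // => x; rewrite x_max; apply/negP => /andP[/eqP xa /eqP xb].
  by rewrite -xa -xb eqxx in neq_ab.
rewrite big_ord_recl -mulmxE mxE.
under eq_bigr do rewrite (IH (fun i => M i.+1)) big_distrr /=.
rewrite (exchange_big_dep (fun x : {ffun 'I_m.+1 -> 'I_n} => x ord_max == b)) /=; last first.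
  by move=> c x _ /andP[].
pose cons_a (x' : {ffun 'I_m.+1 -> 'I_n}) : {ffun 'I_m.+2 -> 'I_n} :=
  [ffun j => if unlift ord0 j is Some j' then x' j' else a].
symmetry; rewrite (reindex cons_a) /=; last first.
  exists (fun x : {ffun 'I_m.+2 -> 'I_n} => [ffun j' => x (lift ord0 j')]).
    by move=> x' _; apply/ffunP => j'; rewrite !ffunE liftK.
  move=> x; rewrite inE => /andP[/eqP x0 _]; apply/ffunP => j; rewrite !ffunE.
  by case: unliftP => [j' ->|->]; rewrite ?ffunE.
have cons_a_max x' : cons_a x' ord_max = x' ord_max.
  have -> : (ord_max : 'I_m.+2) = lift ord0 (ord_max : 'I_m.+1) by apply: val_inj.
  by rewrite ffunE liftK.
apply: eq_big => x'; first by rewrite cons_a_max ffunE unlift_none eqxx.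
move=> /andP[_]; rewrite cons_a_max => x'b.
rewrite (big_pred1 (x' ord0)); last by move=> c; rewrite x'b andbT eq_sym.
rewrite big_ord_recl; congr (_ * _).
  congr (M 0 _ _); rewrite ffunE ?liftK //.
  have -> : widen_ord (leqnSn m.+1) ord0 = ord0 by apply: val_inj.
  by rewrite unlift_none.
apply: eq_bigr => i _; congr (M _ _ _); rewrite ffunE ?liftK //.
have -> : widen_ord (leqnSn m.+1) (lift ord0 i) = lift ord0 (widen_ord (leqnSn m) i).
  by apply: val_inj.
by rewrite liftK.
Qed.

Lemma mxtrace_prodmx_closed_walks m (M : 'I_m.+1 -> 'M[R]_n) :
  \tr (\prod_(i < m.+1) M i) =
  \sum_(y : {ffun 'I_m.+1 -> 'I_n}) \prod_(i < m.+1) M i (y i) (y (ordS i)).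
Proof.
pose Mn (j : nat) := M (inord j).
have -> : \prod_(i < m.+1) M i = \prod_(i < m.+1) Mn i.
  by apply: eq_bigr => i _; rewrite /Mn inord_val.
rewrite /mxtrace; under eq_bigr do rewrite prodmx_entry_walks.
rewrite (exchange_big_dep (fun x : {ffun 'I_m.+2 -> 'I_n} => x ord0 == x ord_max)) /=; last first.
  by move=> a x _ /andP[/eqP -> /eqP ->].
pose close (y : {ffun 'I_m.+1 -> 'I_n}) : {ffun 'I_m.+2 -> 'I_n} :=
  [ffun j : 'I_m.+2 => y (inord (j %% m.+1))].
rewrite (reindex close) /=; last first.
  exists (fun x : {ffun 'I_m.+2 -> 'I_n} => [ffun i => x (widen_ord (leqnSn m.+1) i)]).
    by move=> y _; apply/ffunP => i; rewrite !ffunE /= modn_small // inord_val.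
  move=> x; rewrite inE => /eqP x0; apply/ffunP => j; rewrite !ffunE.
  have [lt_jm|le_mj] := ltnP j m.+1.
    by rewrite modn_small //; congr (x _); apply: val_inj; rewrite /= inordK.
  have -> : j = ord_max.
    by apply: val_inj; apply/eqP; rewrite eqn_leq le_mj -ltnS ltn_ord.
  by rewrite /= modnn -x0; congr (x _); apply: val_inj; rewrite /= inordK.
have close_max y : close y ord_max = close y ord0 by rewrite !ffunE /= modnn mod0n.
apply: eq_big => y; first by rewrite close_max eqxx.
move=> _; rewrite (big_pred1 (close y ord0)); last by move=> c; rewrite close_max andbb eq_sym.
apply: eq_bigr => i _; rewrite /Mn inord_val !ffunE /=; congr (M _ _ _).
  by rewrite modn_small // inord_val.
by congr (y _); apply: val_inj; rewrite /= inordK // ltn_pmod.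
Qed.

End Walks.

Lemma sum_ffun_sigma (R : comPzSemiRingType) (I : finType) (T_ : I -> finType)
    (K : finType) (k0 : K) (G : forall i, {ffun T_ i -> K} -> R) :
  \sum_(psi : {ffun {i : I & T_ i} -> K}) \prod_i G i [ffun v => psi (Tagged T_ v)] =
  \prod_i \sum_(phi : {ffun T_ i -> K}) G i phi.
Proof.
pose J := {i : I & {ffun T_ i -> K}}.
have sum_tag i : \sum_(phi : {ffun T_ i -> K}) G i phi =
                 \sum_(j : J | tag j == i) G (tag j) (tagged j).
  have := @sig_big_dep R 0 +%R I _ (pred1 i) (fun _ _ => true) G.
  by rewrite (big_pred1 i) // => ->; apply: eq_bigl => j; rewrite andbT.
under [RHS]eq_bigr => i _ do rewrite sum_tag.
rewrite bigA_distr_big_dep.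
pose curry (psi : {ffun {i : I & T_ i} -> K}) : {ffun I -> J} :=
  [ffun i => existT _ i [ffun v : T_ i => psi (Tagged T_ v)] : J].
rewrite (reindex curry) /=; last first.
  exists (fun f : {ffun I -> J} => [ffun s : {i : I & T_ i} =>
     tagged_as (existT _ (tag s) [ffun=> k0] : J) (f (tag s)) (tagged s)]).
    by move=> psi _; apply/ffunP => -[i v]; rewrite !ffunE /= tagged_asE ffunE.
  move=> f; rewrite inE => /familyP f_tag; apply/ffunP => i; rewrite !ffunE.
  under eq_ffun => v do rewrite ffunE /=.
  move: (f_tag i); case: (f i) => i' phi /=; rewrite unfold_in /= => /eqP <-.
  by congr (Tagged _ _); apply/ffunP => v; rewrite !ffunE /= tagged_asE.
apply: eq_big => [psi|psi _]; last by apply: eq_bigr => i _; rewrite ffunE.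
by apply/esym/familyP => i; rewrite unfold_in /= ffunE.
Qed.

Lemma prodr_if0 (R : comPzSemiRingType) (I : finType) (b : pred I) (f : I -> R) :
  \prod_i (if b i then f i else 0) = if [forall i, b i] then \prod_i f i else 0.
Proof.
case: ifP => [/forallP b_all|/negbT]; first by apply: eq_bigr => i _; rewrite b_all.
by rewrite negb_forall => /existsP[i /negbTE bi]; rewrite (bigD1 i) //= bi mul0r.
Qed.

Section Glue.
Variables (R : nmodType) (V K : finType) (ids : seq (V * V)).

Definition respects (psi : {ffun V -> K}) := all (fun p => psi p.1 == psi p.2) ids.

Definition qlift (phi : {ffun qtype ids -> K}) : {ffun V -> K} :=
  [ffun x => phi (qproj ids x)].

Lemma respects_connect psi x y : respects psi -> connect (idrel ids) x y -> psi x = psi y.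
Proof.
move=> /allP psi_ids /connectP[p xp ->] {y}.
elim: p x xp => //= z p IH x /andP[xz zp]; rewrite -IH //.
by move: xz; rewrite /idrel => /orP[] /psi_ids /eqP.
Qed.

Lemma qprojK (q : qtype ids) : qproj ids (val q) = q.
Proof. by apply: val_inj; apply/eqP; case: q. Qed.

Lemma sum_qtype_ffun (P : pred {ffun V -> K}) (G : {ffun V -> K} -> R) :
  \sum_(phi : {ffun qtype ids -> K} | P (qlift phi)) G (qlift phi) =
  \sum_(psi | respects psi && P psi) G psi.
Proof.
symmetry; rewrite (reindex qlift) /=.
  apply: eq_bigl => phi; rewrite andb_idl // => _; apply/allP => p p_ids.
  rewrite !ffunE; apply/eqP; congr (phi _); apply: val_inj => /=.
  apply/eqP; rewrite root_connect; last exact/sym_connect_sym/idrel_sym.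
  by apply: connect1; rewrite /idrel -surjective_pairing p_ids.
exists (fun psi : {ffun V -> K} => [ffun q : qtype ids => psi (val q)]).
  by move=> phi _; apply/ffunP => q; rewrite !ffunE qprojK.
move=> psi; rewrite inE => /andP[psi_ids _]; apply/ffunP => x; rewrite !ffunE /=.
by apply/esym/respects_connect => //; exact: connect_root.
Qed.

End Glue.

Section RootedHom.
Variable R : comPzSemiRingType.

Definition edge_weight (V : finType) (E : seq (V * V)) n (beta : 'M[R]_n)
    (phi : {ffun V -> 'I_n}) : R :=
  \prod_(p <- E) beta (phi p.1) (phi p.2).

Definition rhom_mx (H : Defs.rgraph) n (beta : 'M[R]_n) : 'M[R]_n :=
  \matrix_(x, y) \sum_(phi : {ffun rv H -> 'I_n} | (phi (ra H) == x) && (phi (rb H) == y))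
     edge_weight (re H) beta phi.

Lemma rhom_mx_tr (H : Defs.rgraph) n (beta : 'M[R]_n) :
  rhom_mx (rg_tr H) beta = (rhom_mx H beta)^T.
Proof. by apply/matrixP => x y; rewrite !mxE; apply: eq_bigl => phi; rewrite andbC. Qed.

Lemma rhom_mx_sym (H : Defs.rgraph) n (beta : 'M[R]_n) :
  rhom_mx (rg_sym H) beta = \matrix_(x, y) (rhom_mx H beta x y * rhom_mx H beta y x).
Proof.
apply/matrixP => x y; rewrite !mxE /rg_sym /glue /=.
set ids := [:: _; _]; set E := _ ++ _.
pose roots_xy (psi : {ffun (rv H + rv H)%type -> 'I_n}) :=
  (psi (inl (ra H)) == x) && (psi (inl (rb H)) == y).
transitivity (\sum_(phi : {ffun qtype ids -> 'I_n} | roots_xy (qlift phi))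
                edge_weight E beta (qlift phi)).
  apply: eq_big => phi; first by rewrite /roots_xy !ffunE.
  by move=> _; rewrite /edge_weight big_map; apply: eq_bigr => p _; rewrite !ffunE.
rewrite (sum_qtype_ffun _ roots_xy (edge_weight E beta)) big_distrlr pair_big_dep /=.
pose join (fg : {ffun rv H -> 'I_n} * {ffun rv H -> 'I_n}) : {ffun (rv H + rv H)%type -> 'I_n} :=
  [ffun s => match s with inl v => fg.1 v | inr v => fg.2 v end].
rewrite (reindex join) /=; last first.
  exists (fun psi => ([ffun v => psi (inl v)], [ffun v => psi (inr v)])).
    by move=> [f g] _; congr pair; apply/ffunP => v; rewrite !ffunE.
  by move=> psi _; apply/ffunP => -[v|v]; rewrite !ffunE.
apply: eq_big => [[f g]|[f g] _] /=.
  rewrite /respects /roots_xy /= !ffunE /= andbT.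
  case: (f (ra H) =P x) => [->|] /=; last by rewrite !andbF.
  case: (f (rb H) =P y) => [->|] /=; last by rewrite !andbF.
  by rewrite andbT andbC [y == _]eq_sym [x == _]eq_sym.
rewrite /edge_weight /E big_cat /= !big_map.
by congr (_ * _); apply: eq_bigr => p _; rewrite !ffunE.
Qed.

End RootedHom.

Lemma hom_gluem (R : realType) (V : finType) (E ids : seq (V * V)) n (beta : 'M[R]_n) :
  Defs.hom (gluem E ids) beta = \sum_(psi | respects ids psi) edge_weight E beta psi.
Proof.
transitivity (\sum_(phi : {ffun qtype ids -> 'I_n} | xpredT (qlift phi))
                edge_weight E beta (qlift phi)).
  by apply: eq_bigr => phi _; rewrite big_map; apply: eq_bigr => p _; rewrite !ffunE.
by rewrite (sum_qtype_ffun _ xpredT (edge_weight E beta)); apply: eq_bigl => psi; rewrite andbT.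
Qed.

Section Cycle.
Variables (R : realType) (m n : nat) (H : 'I_m.+1 -> Defs.rgraph) (beta : 'M[R]_n.+1).

Local Notation V := {i : 'I_m.+1 & rv (H i)}.
Local Notation vtx i v := (@Tagged _ i (fun j => rv (H j)) v).

Definition restr (psi : {ffun V -> 'I_n.+1}) i : {ffun rv (H i) -> 'I_n.+1} :=
  [ffun v => psi (vtx i v)].

Definition glued_cycle (psi : {ffun V -> 'I_n.+1}) :=
  [forall i, psi (vtx i (rb (H i))) == psi (vtx (ordS i) (ra (H (ordS i))))].

Lemma hom_Gcyc_restr :
  Defs.hom (Gcyc H) beta =
  \sum_(psi | glued_cycle psi) \prod_i edge_weight (re (H i)) beta (restr psi i).
Proof.
rewrite hom_gluem; apply: eq_big => psi.
  rewrite /respects all_map; apply/allP/forallP => [psi_ids i|psi_ids i _].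
    by apply: (psi_ids i); rewrite mem_enum.
  exact: psi_ids.
move=> _; rewrite /edge_weight big_flatten /= big_map big_enum /=.
by apply: eq_bigr => i _; rewrite big_map; apply: eq_bigr => p _; rewrite !ffunE.
Qed.

Definition roots_at (y : {ffun 'I_m.+1 -> 'I_n.+1}) i (phi : {ffun rv (H i) -> 'I_n.+1}) :=
  (phi (ra (H i)) == y i) && (phi (rb (H i)) == y (ordS i)).
Arguments roots_at : clear implicits.

Lemma roots_at_restr psi y :
  [forall i : 'I_m.+1, roots_at y i (restr psi i)] =
  glued_cycle psi && (y == [ffun i => psi (vtx i (ra (H i)))]).
Proof.
apply/forallP/andP => [y_roots|[/forallP psi_glued /eqP ->] i]; last first.
  by rewrite /roots_at !ffunE eqxx (eqP (psi_glued i)) eqxx.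
have {}y_roots i : psi (vtx i (ra (H i))) = y i /\ psi (vtx i (rb (H i))) = y (ordS i).
  by move: (y_roots i); rewrite /roots_at !ffunE => /andP[/eqP -> /eqP ->].
split; last by apply/eqP/ffunP => i; rewrite ffunE (y_roots i).1.
by apply/forallP => i; rewrite (y_roots i).2 (y_roots (ordS i)).1.
Qed.

Lemma hom_Gcyc : Defs.hom (Gcyc H) beta = \tr (\prod_(i < m.+1) rhom_mx (H i) beta).
Proof.
rewrite hom_Gcyc_restr mxtrace_prodmx_closed_walks.
have walk_sum (y : {ffun 'I_m.+1 -> 'I_n.+1}) :
    \prod_i rhom_mx (H i) beta (y i) (y (ordS i)) =
    \sum_(psi : {ffun V -> 'I_n.+1})
      \prod_i (if roots_at y i (restr psi i) then edge_weight (re (H i)) beta (restr psi i)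
               else 0).
  rewrite (sum_ffun_sigma ord0
    (fun i phi => if roots_at y i phi then edge_weight (re (H i)) beta phi else 0)).
  by apply: eq_bigr => i _; rewrite mxE big_mkcond.
under [RHS]eq_bigr do rewrite walk_sum.
rewrite exchange_big /= big_mkcond; apply: eq_bigr => psi _.
under [RHS]eq_bigr => y _ do
  rewrite (prodr_if0 (fun i => roots_at y i (restr psi i))) roots_at_restr.
case: (glued_cycle psi) => /=; last by rewrite big1.
by rewrite -big_mkcond big_pred1_eq.
Qed.

End Cycle.

Lemma hom_G2 (R : realType) k n (H : 'I_k.+1 -> Defs.rgraph) (beta : 'M[R]_n.+1) :
  Defs.hom (G2 H) beta = \tr ((\prod_(i < k.+1) rhom_mx (H i) beta) ^+ 2).
Proof.
rewrite /G2 (hom_Gcyc (m := k + k.+1)) (@big_split_ord _ _ _ k.+1 k.+1) /= expr2.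
congr (\tr (_ * _)); apply: eq_bigr => i _.
  by rewrite (unsplitK (inl i)).
by rewrite (unsplitK (inr i)).
Qed.

Lemma hom_ge0_nil (R : realType) (G : mgraph) n (beta : 'M[R]_n) :
  me G = [::] -> 0 <= Defs.hom G beta.
Proof. by move=> noE; apply: sumr_ge0 => phi _; rewrite noE big_nil ler01. Qed.

Lemma hom_ge0_dim0 (R : realType) (G : mgraph) (beta : 'M[R]_0) : 0 <= Defs.hom G beta.
Proof.
apply: sumr_ge0 => phi _; case: (me G) => [|p E]; first by rewrite big_nil ler01.
by case: (phi p.1).
Qed.

Section Assignment.
Variables (l k : nat) (iota : 'I_k -> 'I_l) (tau : 'I_k -> mtype).

Definition sym_var (j : 'I_l) : bool :=
  [exists i, (iota i == j) && mtype_eqb (tau i) Tsym].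

Hypothesis tau_consistent : sym_consistent iota tau.

Lemma sym_varP i : sym_var (iota i) = mtype_eqb (tau i) Tsym.
Proof.
apply/existsP/idP => [[i' /andP[/eqP eq_i' sym_i']]|]; last by exists i; rewrite eqxx.
have sym_tau_i' : tau i' = Tsym by move: sym_i'; case: (tau i').
by rewrite (tau_consistent sym_tau_i' (esym eq_i')).
Qed.

Variables (R : realType) (n : nat) (beta : 'M[R]_n) (F : 'I_l -> ergraph).

Definition rhom_assignment (j : 'I_l) : 'M[R]_n :=
  rhom_mx (if sym_var j then rg_sym (erg_rg (F j)) else erg_rg (F j)) beta.

Lemma rhom_assignment_admissible : admissible iota tau rhom_assignment.
Proof.
move=> i sym_i; rewrite /rhom_assignment sym_varP sym_i /= rhom_mx_sym.
by apply/matrixP => x y; rewrite !mxE mulrC.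
Qed.

Lemma rhom_mx_pow i :
  rhom_mx (rg_pow (tau i) (erg_rg (F (iota i)))) beta =
  subst_factor rhom_assignment (iota i) (tau i).
Proof.
by rewrite /subst_factor /rhom_assignment sym_varP; case: (tau i); rewrite //= rhom_mx_tr.
Qed.

Lemma rhom_mx_prod :
  \prod_(i < k) rhom_mx (rg_pow (tau i) (erg_rg (F (iota i)))) beta =
  eval_prod iota tau rhom_assignment.
Proof. by apply: eq_bigr => i _; exact: rhom_mx_pow. Qed.

End Assignment.

Theorem mainTheorem12 (R : realType) (l k : nat)
  (iota : 'I_k -> 'I_l) (tau : 'I_k -> mtype) (F : 'I_l -> ergraph) :
  sym_consistent iota tau ->
  real_eigenvalued R iota tau ->
  positive_graph R (G2 (fun i : 'I_k => rg_pow (tau i) (erg_rg (F (iota i))))).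
Proof.
move=> tau_consistent real_spec [|n] beta _; first exact: hom_ge0_dim0.
case: k iota tau tau_consistent real_spec => [|k] iota tau tau_consistent real_spec.
  by apply: hom_ge0_nil; rewrite /= enum_ord0.
rewrite hom_G2 rhom_mx_prod //.
exact/mxtrace_sqr_ge0/real_spec/rhom_assignment_admissible.
Qed.
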